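(* Let $m,n\in\mathbb{N}$, $\varepsilon\in\mathbb{R}$, and let $\bar g=-4\,du\,dv+\bar\rho^2\mathring\gamma_{\mathbb{S}^{n-1}}-\tau^2\mathring\gamma_{\mathbb{S}^{m-1}}$ with $\bar\rho=r+2\varepsilon f$. Then, wherever the coordinates are defined and $\bar\rho\ne0$, \[ \bar\square\Big(\frac{f}{\bar\rho}\Big)=-\frac{(n-3)f}{\bar\rho^3}+\frac{(n+m-2)\,r}{2\bar\rho^2}. \]
   Context: On $\mathbb{R}^{m+n}$ with Cartesian coordinates $t\in\mathbb{R}^m$, $x\in\mathbb{R}^n$: $r=|x|$, $\tau=|t|$, $u=\frac12(\tau-r)$, $v=\frac12(\tau+r)$, $f=-uv=\frac14(|x|^2-|t|^2)$. On $\{\tau\ne0,r\ne0\}$ one uses coordinates $(u,v,\omega_x,\omega_t)$ with $\omega_x=x/|x|\in\mathbb{S}^{n-1}$, $\omega_t=t/|t|\in\mathbb{S}^{m-1}$; $\mathring\gamma_{\mathbb{S}^k}$ is the unit round metric. $\bar\square=\bar g^{\alpha\beta}\bar\nabla_{\alpha\beta}$ is the wave operator of $\bar g$. *)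

From Stdlib Require Import Reals.
From Coquelicot Require Import Coquelicot.
Open Scope R_scope.

(* Null coordinates: u = (tau - r)/2, v = (tau + r)/2, so
   tau = u + v, r = v - u, f = -u v. *)
Definition tau_uv (u v : R) : R := u + v.
Definition r_uv (u v : R) : R := v - u.
Definition f_uv (u v : R) : R := - (u * v).

Definition rhobar (eps : R) (u v : R) : R := r_uv u v + 2 * eps * f_uv u v.

(* Volume density of  gbar = -4 du dv + rho^2 g_{S^{n-1}} - tau^2 g_{S^{m-1}}
   in coordinates (u,v,omega_x,omega_t), up to the factor
   2 sqrt(det g_{S^{n-1}}) sqrt(det g_{S^{m-1}}) which does not depend on
   (u,v) and cancels in the wave operator. *)
Definition vol_density (m n : nat) (rho : R -> R -> R) (u v : R) : R :=
  Rabs (rho u v) ^ (n - 1) * Rabs (tau_uv u v) ^ (m - 1).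

(* Wave operator of gbar, box = |g|^{-1/2} d_a (|g|^{1/2} g^{ab} d_b .),
   applied to a function Phi of (u,v) only (angular derivatives vanish).
   The (u,v)-block of gbar is g_{uv} = g_{vu} = -2, so g^{uv} = g^{vu} = -1/2. *)
Definition wave_uv (m n : nat) (rho : R -> R -> R) (Phi : R -> R -> R)
    (u v : R) : R :=
  / vol_density m n rho u v *
  ( Derive (fun u' => vol_density m n rho u' v * (-1/2) *
                       Derive (fun v' => Phi u' v') v) u
  + Derive (fun v' => vol_density m n rho u v' * (-1/2) *
                       Derive (fun u' => Phi u' v') u) v ).

(** For [Phi] depending on [(u, v)] only, the wave operator of [gbar] is
    [box Phi = - d_u d_v Phi - 1/2 (d_u log J d_v Phi + d_v log J d_u Phi)]
    with volume density [J = |rhobar|^(n-1) |tau|^(m-1)], so that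
    [d log J = (n-1) d rhobar / rhobar + (m-1) d tau / tau].
    For [Phi = f / rhobar] the [eps] terms cancel in the first derivatives,
    [d_v Phi = u^2 / rhobar^2] and [d_u Phi = - v^2 / rhobar^2], both mixed
    derivatives equal [2 u v / rhobar^3], and what remains is algebra using
    [u^2 - v^2 = - r tau] and [rhobar = r - 2 eps u v]. *)

From Stdlib Require Import Reals Lra.
From Coquelicot Require Import Coquelicot.
Open Scope R_scope.

Lemma locally_neq_0 (g : R -> R) (x : R) :
  continuous g x -> g x <> 0 -> locally x (fun y => g y <> 0).
Proof.
  intros Hg Hx.
  apply (Hg (fun z => z <> 0)).
  assert (Habs : 0 < Rabs (g x)) by (apply Rabs_pos_lt; exact Hx).
  exists (mkposreal _ Habs).
  intros z Hz Ez; subst z.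
  unfold ball in Hz; simpl in Hz; unfold AbsRing_ball, abs, minus, plus, opp in Hz;
    simpl in Hz.
  rewrite Rplus_0_l, Rabs_Ropp in Hz.
  lra.
Qed.

Lemma is_derive_Rabs_pow (f : R -> R) (x df : R) (p : nat) :
  is_derive f x df -> f x <> 0 ->
  is_derive (fun y => Rabs (f y) ^ p) x (INR p * df / f x * Rabs (f x) ^ p).
Proof.
  intros Hf Hx.
  replace (INR p * df / f x * Rabs (f x) ^ p)
    with (INR p * (sign (f x) * df) * Rabs (f x) ^ Init.Nat.pred p).
  - apply (is_derive_pow (fun y => Rabs (f y))), is_derive_Rabs; assumption.
  - destruct (Rlt_or_le 0 (f x)) as [Hpos | Hneg];
      [rewrite sign_eq_1, Rabs_pos_eq by lra | rewrite sign_eq_m1, Rabs_left by lra];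
      destruct p as [|p]; simpl; field; exact Hx.
Qed.

Lemma is_derive_Rabs_pow_mul (f g : R -> R) (x df dg : R) (p q : nat) :
  is_derive f x df -> is_derive g x dg -> f x <> 0 -> g x <> 0 ->
  is_derive (fun y => Rabs (f y) ^ p * Rabs (g y) ^ q) x
    ((INR p * df / f x + INR q * dg / g x) * (Rabs (f x) ^ p * Rabs (g x) ^ q)).
Proof.
  intros Hf Hg Hfx Hgx.
  replace ((INR p * df / f x + INR q * dg / g x) * (Rabs (f x) ^ p * Rabs (g x) ^ q))
    with (INR p * df / f x * Rabs (f x) ^ p * Rabs (g x) ^ q
          + Rabs (f x) ^ p * (INR q * dg / g x * Rabs (g x) ^ q)) by ring.
  apply Derive.is_derive_mult; apply is_derive_Rabs_pow; assumption.
Qed.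

Lemma vol_density_neq_0 (m n : nat) (rho : R -> R -> R) (u v : R) :
  rho u v <> 0 -> tau_uv u v <> 0 -> vol_density m n rho u v <> 0.
Proof.
  intros Hrho Htau.
  unfold vol_density.
  apply Rmult_integral_contrapositive_currified; apply pow_nonzero, Rabs_no_R0;
    assumption.
Qed.

Lemma is_derive_vol_density_u (m n : nat) (rho : R -> R -> R) (u v drho : R) :
  is_derive (fun u' => rho u' v) u drho -> rho u v <> 0 -> tau_uv u v <> 0 ->
  is_derive (fun u' => vol_density m n rho u' v) u
    ((INR (n - 1) * drho / rho u v + INR (m - 1) / tau_uv u v)
     * vol_density m n rho u v).
Proof.
  intros Hrho Hrho0 Htau.
  replace (INR (m - 1) / tau_uv u v) with (INR (m - 1) * 1 / tau_uv u v)
    by now rewrite Rmult_1_r.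
  apply (is_derive_Rabs_pow_mul (fun u' => rho u' v) (fun u' => tau_uv u' v));
    try assumption.
  unfold tau_uv. auto_derive; [exact I | ring].
Qed.

Lemma is_derive_vol_density_v (m n : nat) (rho : R -> R -> R) (u v drho : R) :
  is_derive (fun v' => rho u v') v drho -> rho u v <> 0 -> tau_uv u v <> 0 ->
  is_derive (fun v' => vol_density m n rho u v') v
    ((INR (n - 1) * drho / rho u v + INR (m - 1) / tau_uv u v)
     * vol_density m n rho u v).
Proof.
  intros Hrho Hrho0 Htau.
  replace (INR (m - 1) / tau_uv u v) with (INR (m - 1) * 1 / tau_uv u v)
    by now rewrite Rmult_1_r.
  apply (is_derive_Rabs_pow_mul (fun v' => rho u v') (fun v' => tau_uv u v'));
    try assumption.
  unfold tau_uv. auto_derive; [exact I | ring].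
Qed.

Lemma wave_uv_log_derivative (m n : nat) (rho Phi dvPhi duPhi : R -> R -> R)
    (u v lu lv d2uv d2vu : R) :
  vol_density m n rho u v <> 0 ->
  is_derive (fun u' => vol_density m n rho u' v) u (lu * vol_density m n rho u v) ->
  is_derive (fun v' => vol_density m n rho u v') v (lv * vol_density m n rho u v) ->
  locally u (fun u' => Derive (fun v' => Phi u' v') v = dvPhi u' v) ->
  locally v (fun v' => Derive (fun u' => Phi u' v') u = duPhi u v') ->
  is_derive (fun u' => dvPhi u' v) u d2uv ->
  is_derive (fun v' => duPhi u v') v d2vu ->
  wave_uv m n rho Phi u v
  = - (d2uv + d2vu) / 2 - (lu * dvPhi u v + lv * duPhi u v) / 2.
Proof.
  intros HJ HJu HJv Hdv Hdu Huv Hvu.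
  unfold wave_uv.
  rewrite (Derive_ext_loc
             (fun u' => vol_density m n rho u' v * (-1/2) * Derive (fun v' => Phi u' v') v)
             (fun u' : R => vol_density m n rho u' v * (-1/2) * dvPhi u' v)).
  2: { eapply filter_imp; [|exact Hdv]. intros u' E. now rewrite E. }
  rewrite (Derive_ext_loc
             (fun v' => vol_density m n rho u v' * (-1/2) * Derive (fun u' => Phi u' v') u)
             (fun v' : R => vol_density m n rho u v' * (-1/2) * duPhi u v')).
  2: { eapply filter_imp; [|exact Hdu]. intros v' E. now rewrite E. }
  assert (Hconst : is_derive (fun _ : R => -1/2) u 0) by exact (is_derive_const _ _).
  assert (Hconst' : is_derive (fun _ : R => -1/2) v 0) by exact (is_derive_const _ _).
  pose proof (Derive.is_derive_mult _ _ _ _ _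
                (Derive.is_derive_mult _ _ _ _ _ HJu Hconst) Huv) as Hflux_u.
  pose proof (Derive.is_derive_mult _ _ _ _ _
                (Derive.is_derive_mult _ _ _ _ _ HJv Hconst') Hvu) as Hflux_v.
  cbv beta in Hflux_u, Hflux_v.
  rewrite (is_derive_unique _ _ _ Hflux_u), (is_derive_unique _ _ _ Hflux_v).
  field. exact HJ.
Qed.

Lemma is_derive_rhobar_u (eps u v : R) :
  is_derive (fun u' => rhobar eps u' v) u (- (1 + 2 * eps * v)).
Proof. unfold rhobar, r_uv, f_uv. auto_derive; [exact I | ring]. Qed.

Lemma is_derive_rhobar_v (eps u v : R) :
  is_derive (fun v' => rhobar eps u v') v (1 - 2 * eps * u).
Proof. unfold rhobar, r_uv, f_uv. auto_derive; [exact I | ring]. Qed.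

Lemma Derive_v_f_div_rhobar (eps u v : R) :
  rhobar eps u v <> 0 ->
  Derive (fun v' => f_uv u v' / rhobar eps u v') v = u ^ 2 / rhobar eps u v ^ 2.
Proof.
  intros Hrho. apply is_derive_unique.
  unfold rhobar, r_uv, f_uv in *. auto_derive; [exact Hrho | field; exact Hrho].
Qed.

Lemma Derive_u_f_div_rhobar (eps u v : R) :
  rhobar eps u v <> 0 ->
  Derive (fun u' => f_uv u' v / rhobar eps u' v) u = - v ^ 2 / rhobar eps u v ^ 2.
Proof.
  intros Hrho. apply is_derive_unique.
  unfold rhobar, r_uv, f_uv in *. auto_derive; [exact Hrho | field; exact Hrho].
Qed.

Lemma locally_Derive_v_f_div_rhobar (eps u v : R) :
  rhobar eps u v <> 0 ->
  locally u (fun u' =>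
    Derive (fun v' => f_uv u' v' / rhobar eps u' v') v = u' ^ 2 / rhobar eps u' v ^ 2).
Proof.
  intros Hrho.
  eapply filter_imp; [intros u' Hu'; exact (Derive_v_f_div_rhobar eps u' v Hu') |].
  apply (locally_neq_0 (fun u' => rhobar eps u' v)); [|exact Hrho].
  apply (ex_derive_continuous (fun u' => rhobar eps u' v)).
  eexists; apply is_derive_rhobar_u.
Qed.

Lemma locally_Derive_u_f_div_rhobar (eps u v : R) :
  rhobar eps u v <> 0 ->
  locally v (fun v' =>
    Derive (fun u' => f_uv u' v' / rhobar eps u' v') u = - v' ^ 2 / rhobar eps u v' ^ 2).
Proof.
  intros Hrho.
  eapply filter_imp; [intros v' Hv'; exact (Derive_u_f_div_rhobar eps u v' Hv') |].
  apply (locally_neq_0 (fun v' => rhobar eps u v')); [|exact Hrho].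
  apply (ex_derive_continuous (fun v' => rhobar eps u v')).
  eexists; apply is_derive_rhobar_v.
Qed.

Lemma is_derive_u_sqr_div_rhobar_sqr (eps u v : R) :
  rhobar eps u v <> 0 ->
  is_derive (fun u' => u' ^ 2 / rhobar eps u' v ^ 2) u
    (- 2 * f_uv u v / rhobar eps u v ^ 3).
Proof.
  intros Hrho.
  unfold rhobar, r_uv, f_uv in *. auto_derive.
  - rewrite Rmult_1_r. apply Rmult_integral_contrapositive_currified; exact Hrho.
  - field. exact Hrho.
Qed.

Lemma is_derive_v_sqr_div_rhobar_sqr (eps u v : R) :
  rhobar eps u v <> 0 ->
  is_derive (fun v' => - v' ^ 2 / rhobar eps u v' ^ 2) v
    (- 2 * f_uv u v / rhobar eps u v ^ 3).
Proof.
  intros Hrho.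
  unfold rhobar, r_uv, f_uv in *. auto_derive.
  - rewrite Rmult_1_r. apply Rmult_integral_contrapositive_currified; exact Hrho.
  - field. exact Hrho.
Qed.

Theorem proposition3p4 (m n : nat) (eps u v : R) :
  (1 <= m)%nat -> (1 <= n)%nat ->
  0 < tau_uv u v -> 0 < r_uv u v ->
  rhobar eps u v <> 0 ->
  wave_uv m n (rhobar eps) (fun u' v' => f_uv u' v' / rhobar eps u' v') u v
  = - (INR n - 3) * f_uv u v / rhobar eps u v ^ 3
    + (INR n + INR m - 2) * r_uv u v / (2 * rhobar eps u v ^ 2).
Proof.
  intros Hm Hn Htau _ Hrho.
  assert (Htau0 : tau_uv u v <> 0) by lra.
  rewrite (wave_uv_log_derivative m n (rhobar eps)
             (fun u' v' => f_uv u' v' / rhobar eps u' v')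
             (fun u' v' => u' ^ 2 / rhobar eps u' v' ^ 2)
             (fun u' v' => - v' ^ 2 / rhobar eps u' v' ^ 2) u v _ _ _ _
             (vol_density_neq_0 m n (rhobar eps) u v Hrho Htau0)
             (is_derive_vol_density_u m n (rhobar eps) u v _
                (is_derive_rhobar_u eps u v) Hrho Htau0)
             (is_derive_vol_density_v m n (rhobar eps) u v _
                (is_derive_rhobar_v eps u v) Hrho Htau0)
             (locally_Derive_v_f_div_rhobar eps u v Hrho)
             (locally_Derive_u_f_div_rhobar eps u v Hrho)
             (is_derive_u_sqr_div_rhobar_sqr eps u v Hrho)
             (is_derive_v_sqr_div_rhobar_sqr eps u v Hrho)).
  rewrite !minus_INR, INR_1 by assumption.
  unfold rhobar, r_uv, f_uv, tau_uv in *.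
  field. split; assumption.
Qed.
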